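(* Let $\mathbb A$ be a unital associative algebra over a field of characteristic zero and $X,Y\in\mathbb A$. Then in $\mathbb A[[t]]$ $$e^{tX}e^{tY}=1_{\mathbb A}+\sum_{r=1}^\infty\sum_{n_1,\dots,n_r=1}^\infty\frac{1}{n_r(n_r+n_{r-1})\cdots(n_r+\cdots+n_1)}\,D_{n_1}\cdots D_{n_r},$$ where $D_n=\frac{t^n}{(n-1)!}\mathrm{ad}_X^{n-1}(X+Y)$ for each $n\ge1$.
   Context: $\mathrm{ad}_AB=AB-BA$; the sum converges $t$-adically since $D_n\in t^n\mathbb A$. *)

From HB Require Import structures.
From mathcomp Require Import all_boot all_order all_algebra.
Set Implicit Arguments. Unset Strict Implicit. Unset Printing Implicit Defensive.
Import Order.TTheory GRing.Theory Num.Theory.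
Local Open Scope ring_scope.

Section FPS.
Variables (F : fieldType) (A : algType F).

(* A[[t]]: the coefficient of t^n is (f n). *)
Definition fps := nat -> A.

Definition fps_one : fps := fun n => if n == 0%N then 1 else 0.
Definition fps_add (f g : fps) : fps := fun n => f n + g n.

(* Cauchy product in A[[t]] (t central, A possibly noncommutative). *)
Definition fps_mul (f g : fps) : fps :=
  fun n => \sum_(i < n.+1) f i * g (n - i)%N.

Definition fps_prod (s : seq fps) : fps := foldr fps_mul fps_one s.

Definition fps_scale (c : F) (f : fps) : fps := fun n => c *: f n.

Definition fps_exp (X : A) : fps := fun n => (n`!%:R)^-1 *: X ^+ n.

Definition ad (X B : A) : A := X * B - B * X.

Definition Dn (X Y : A) (n : nat) : fps :=
  fun m => if m == n then ((n.-1)`!%:R)^-1 *: iter n.-1 (ad X) (X + Y) else 0.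

(* n_r (n_r + n_{r-1}) ... (n_r + ... + n_1) for s = [:: n_1; ...; n_r] *)
Definition denom (s : seq nat) : nat := \prod_(i < size s) sumn (drop i s).

Definition valid_index (s : seq nat) : bool := (size s > 0)%N && all (fun n => n > 0)%N s.

Definition bch_term (X Y : A) (s : seq nat) : fps :=
  fps_scale ((denom s)%:R)^-1 (fps_prod (map (Dn X Y) s)).

(* t-adic summation: the family (F_i)_{i in P} is summable with sum S iff for
   every N only finitely many F_i have a nonzero coefficient of degree <= N,
   and the coefficient of t^N of S is the (finite) sum of those of the F_i. *)
Definition tadic_sum_to (I : eqType) (P : pred I) (Fam : I -> fps) (S : fps) : Prop :=
  forall N : nat, exists fin : seq I,
    [/\ uniq fin, all P fin,
        (forall i, P i -> i \notin fin -> forall k, (k <= N)%N -> Fam i k = 0)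
      & S N = \sum_(i <- fin) Fam i N].

End FPS.

(* Write C = e^{tX} e^{tY} = sum_n c_n t^n.  Differentiating,
   C' = e^{tX} (X + Y) e^{tY} = (e^{tX} (X + Y) e^{-tX}) C, and
   e^{tX} (X + Y) e^{-tX} = e^{t ad_X} (X + Y) = t^{-1} sum_k D_k.  Writing D_k = d_k t^k,
   comparing coefficients gives n c_n = sum_{k=1}^n d_k c_{n-k}; unfolding this recursion
   along the first part of a composition (n_1, ..., n_r) of n yields
   c_n = sum d_{n_1} ... d_{n_r} / (n (n - n_1) ... n_r).  Each D_{n_1} ... D_{n_r} is
   homogeneous of degree n_1 + ... + n_r, so the double sum converges t-adically. *)

From HB Require Import structures.
From mathcomp Require Import all_boot all_order all_algebra zify.
From Stdlib Require Import FunctionalExtensionality.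
Set Implicit Arguments. Unset Strict Implicit. Unset Printing Implicit Defensive.
Import GRing.Theory.

(* Enumerated by first part; the fuel only makes the recursion structural. *)
Fixpoint compositions_fuel (fuel n : nat) : seq (seq nat) :=
  match fuel with
  | 0 => if n == 0 then [:: [::]] else [::]
  | fuel'.+1 => if n == 0 then [:: [::]] else
      [seq m :: s | m <- iota 1 n, s <- compositions_fuel fuel' (n - m)]
  end.

Definition compositions (n : nat) : seq (seq nat) := compositions_fuel n n.

Lemma compositions_fuel_enough f g n : n <= f -> n <= g ->
  compositions_fuel f n = compositions_fuel g n.
Proof.
elim: f g n => [|f IH] [|g] [|n] // lenf leng.
rewrite /compositions_fuel -/compositions_fuel /allpairs_dep; congr flatten.
by apply/eq_in_map => m; rewrite mem_iota => /andP [m1 m2]; rewrite (IH g) //; lia.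
Qed.

Lemma compositions0 : compositions 0 = [:: [::]].
Proof. by []. Qed.

Lemma compositionsS n : compositions n.+1 =
  [seq m :: s | m <- iota 1 n.+1, s <- compositions (n.+1 - m)].
Proof.
rewrite /compositions {1}/compositions_fuel -/compositions_fuel /allpairs_dep; congr flatten.
apply/eq_in_map => m; rewrite mem_iota => /andP [m1 m2].
by rewrite (@compositions_fuel_enough n (n.+1 - m)) //; lia.
Qed.

Lemma mem_compositions n s :
  (s \in compositions n) = all (fun m => 0 < m) s && (sumn s == n).
Proof.
elim/ltn_ind: n s => [[|n]] IH s.
  by rewrite compositions0 inE; case: s => [|[|m] s] //=; rewrite addSn andbF.
rewrite compositionsS; apply/allpairsPdep/idP => [[m [s' []]]|].
  rewrite mem_iota => /andP [m1 m2]; rewrite IH; last lia.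
  move=> /andP [pos /eqP e] ->.
  by rewrite /= m1 pos e; apply/eqP; lia.
case: s => [|m s] // /andP [/andP [m1 pos] /eqP e]; rewrite /= in e.
exists m, s; rewrite mem_iota IH; last lia.
split=> //; first lia.
by apply/andP; split; [exact: pos | apply/eqP; lia].
Qed.

Lemma compositions_uniq n : uniq (compositions n).
Proof.
elim/ltn_ind: n => [[|n]] IH //; rewrite compositionsS.
apply: allpairs_uniq_dep => [|m|]; first exact: iota_uniq.
  by rewrite mem_iota => /andP [m1 _]; apply: IH; lia.
by move=> [m1 s1] [m2 s2] _ _ /= [-> ->].
Qed.

Lemma valid_index_sumn_gt0 s : valid_index s -> 0 < sumn s.
Proof. by case: s => [|m s] // /andP [_ /andP [m_gt0 _]]; rewrite addn_gt0 m_gt0. Qed.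

Lemma compositionsS_valid n : all valid_index (compositions n.+1).
Proof. by apply/allP => -[|m s]; rewrite mem_compositions //= => /andP [pos _]. Qed.

Local Open Scope ring_scope.

Section PowerSeries.
Variables (F : fieldType) (A : algType F).

Lemma fps_mulA (f g h : fps A) : fps_mul (fps_mul f g) h = fps_mul f (fps_mul g h).
Proof.
apply: functional_extensionality => n.
(* Below degree n the product is that of the truncations in {poly A}. *)
pose P (u : fps A) := \poly_(i < n.+1) u i : {poly A}.
have coefP u k : (k <= n)%N -> (P u)`_k = u k by rewrite coef_poly ltnS => ->.
have coef_mul u v k : (k <= n)%N -> fps_mul u v k = (P u * P v)`_k.
  move=> len; rewrite coefM; apply: eq_bigr => i _.
  by rewrite !coefP //; have := ltn_ord i; lia.
have -> : fps_mul (fps_mul f g) h n = (P f * P g * P h)`_n.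
  rewrite coefM; apply: eq_bigr => i _.
  by rewrite coef_mul -1?ltnS // coefP ?leq_subr.
have -> : fps_mul f (fps_mul g h) n = (P f * (P g * P h))`_n.
  rewrite coefM; apply: eq_bigr => i _.
  by rewrite coefP -1?ltnS // -coef_mul ?leq_subr.
by rewrite mulrA.
Qed.

Definition fps_deriv (f : fps A) : fps A := fun n => f n.+1 *+ n.+1.

Lemma fps_deriv_mul (f g : fps A) :
  fps_deriv (fps_mul f g) = fps_add (fps_mul (fps_deriv f) g) (fps_mul f (fps_deriv g)).
Proof.
apply: functional_extensionality => n; rewrite /fps_deriv /fps_add /fps_mul -sumrMnl.
have -> : \sum_(i < n.+2) f i * g (n.+1 - i)%N *+ n.+1 =
    \sum_(i < n.+2) f i *+ i * g (n.+1 - i)%N +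
    \sum_(i < n.+2) f i * g (n.+1 - i)%N *+ (n.+1 - i).
  by rewrite -big_split; apply: eq_bigr => i _ /=; rewrite mulrnAl -mulrnDr subnKC // -ltnS.
congr (_ + _).
  rewrite big_ord_recl /= mulr0n mul0r add0r.
  by apply: eq_bigr => i _; rewrite /bump /= ?add1n subSS.
rewrite big_ord_recr /= subnn mulr0n addr0; apply: eq_bigr => i _.
by rewrite -mulrnAr subSn // -ltnS.
Qed.

Lemma coef_fps_prod_homogeneous (G : nat -> fps A) (g : nat -> A) :
    (forall n k, G n k = if k == n then g n else 0) ->
  forall s k, fps_prod (map G s) k = if k == sumn s then \prod_(n <- s) g n else 0.
Proof.
move=> homG; elim=> [|m s IH] k /=; first by rewrite /fps_one big_nil.
rewrite /fps_mul (eq_bigr (fun i : 'I_k.+1 =>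
    if i == m :> nat then g m * fps_prod (map G s) (k - i)%N else 0)); last first.
  by move=> i _; rewrite homG; case: eqP; rewrite ?mul0r.
rewrite -big_mkcond (big_ord1_eq _ (fun i => g m * fps_prod (map G s) (k - i)%N)) big_cons.
case: ltnP => lemk; last by case: eqP => //; lia.
rewrite IH (_ : (k - m == sumn s)%N = (k == m + sumn s)%N); last by apply/eqP/eqP; lia.
by case: eqP; rewrite ?mulr0.
Qed.

Lemma tadic_sum_to_compositions (Fam : seq nat -> fps A) (f : seq nat -> A) :
    (forall s k, Fam s k = if k == sumn s then f s else 0) ->
  tadic_sum_to valid_index Fam (fun N => \sum_(s <- compositions N | valid_index s) f s).
Proof.
move=> homFam N; exists [seq s | n <- iota 1 N, s <- compositions n]; split.
- apply: allpairs_uniq_dep => [|n _|]; [exact: iota_uniq | exact: compositions_uniq |].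
  move=> _ _ /allpairsPdep [n1 [s1 [_ s1n ->]]] /allpairsPdep [n2 [s2 [_ s2n ->]]] /= eq_s.
  by move: s1n s2n; rewrite eq_s !mem_compositions => /andP [_ /eqP <-] /andP [_ /eqP ->].
- apply/allP => s /allpairsPdep [[|n] [s' [+ + ->]]]; rewrite mem_iota // => _.
  exact/allP/compositionsS_valid.
- move=> s valid_s s_notin k leN; rewrite homFam; case: eqP => // k_sum.
  case/negP: s_notin; apply/allpairsPdep; exists (sumn s), s; split=> //.
    by rewrite mem_iota valid_index_sumn_gt0 //=; lia.
  by rewrite mem_compositions eqxx andbT; case/andP: valid_s.
- case: N => [|N]; first by rewrite compositions0 !big_cons !big_nil.
  rewrite big_allpairs_dep (eq_big_seq (fun n =>
      if n == N.+1 then \sum_(s <- compositions N.+1) f s else 0)); last first.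
    move=> n _; case: eqP => [->|neN].
      apply: eq_big_seq => s; rewrite homFam mem_compositions.
      by move=> /andP [_ /eqP ->]; rewrite eqxx.
    apply: big1_seq => s /andP [_]; rewrite homFam mem_compositions => /andP [_ /eqP sum_s].
    by case: eqP => // eqN; case: neN; rewrite -sum_s.
  rewrite -[iota 1 N.+1]/(index_iota 1 N.+2) -big_mkcond big_nat1_eq ltnSn /=.
  by rewrite -big_filter (all_filterP (compositionsS_valid N)).
Qed.

Lemma fps_exp_comm (Z : A) n : Z * fps_exp Z n = fps_exp Z n * Z.
Proof. by rewrite /fps_exp -scalerAr -scalerAl -exprS -exprSr. Qed.

(* The series e^{tX} B e^{-tX} = e^{t ad_X} B. *)
Definition fps_exp_ad (X B : A) : fps A := fun m => (m`!%:R)^-1 *: iter m (ad X) B.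

Lemma adZ (X : A) c B : ad X (c *: B) = c *: ad X B.
Proof. by rewrite /ad -scalerAr -scalerAl scalerBr. Qed.

Definition composition_term (d : nat -> A) (s : seq nat) : A :=
  ((denom s)%:R)^-1 *: \prod_(n <- s) d n.

Lemma denom_cons m s : denom (m :: s) = ((m + sumn s) * denom s)%N.
Proof. by rewrite /denom big_ord_recl. Qed.

Lemma composition_term_nil d : composition_term d [::] = 1.
Proof. by rewrite /composition_term /denom big_ord0 big_nil invr1 scale1r. Qed.

Lemma coef_bch_term (X Y : A) s k :
  bch_term X Y s k = if k == sumn s then composition_term (fun n => Dn X Y n n) s else 0.
Proof.
rewrite /bch_term /fps_scale (coef_fps_prod_homogeneous (g := fun n => Dn X Y n n)).
  by case: eqP; rewrite ?scaler0.
by move=> n m; rewrite /Dn eqxx.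
Qed.

Section CharZero.
Hypothesis charF0 : [pchar F] =i pred0.

Lemma natrS_neq0 k : (k.+1%:R : F) != 0.
Proof. by have /pcharf0P -> := charF0. Qed.

Lemma mulrnS_inj (x y : A) k : x *+ k.+1 = y *+ k.+1 -> x = y.
Proof.
rewrite -!scaler_nat => /(congr1 (fun z => (k.+1%:R : F)^-1 *: z)).
by rewrite !scalerA mulVf ?natrS_neq0 // !scale1r.
Qed.

Lemma fps_ode_unique (a : A) (f g : fps A) : f 0%N = g 0%N ->
    (forall n, fps_deriv f n = a * f n) -> (forall n, fps_deriv g n = a * g n) ->
  f = g.
Proof.
move=> eq0 f' g'; apply: functional_extensionality; elim=> // n IH.
by apply: (@mulrnS_inj _ _ n); rewrite -[LHS]/(fps_deriv f n) f' IH -g'.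
Qed.

Lemma fps_deriv_exp (Z : A) n : fps_deriv (fps_exp Z) n = Z * fps_exp Z n.
Proof.
rewrite /fps_deriv /fps_exp -scaler_nat scalerA factS natrM invfM mulrA divff ?natrS_neq0 //.
by rewrite mul1r exprS scalerAr.
Qed.

Lemma fps_deriv_exp_ad (X B : A) n :
  fps_deriv (fps_exp_ad X B) n = ad X (fps_exp_ad X B n).
Proof.
rewrite /fps_deriv /fps_exp_ad -scaler_nat scalerA factS natrM invfM mulrA divff ?natrS_neq0 //.
by rewrite mul1r iterS adZ.
Qed.

Lemma fps_exp_ad_mul_exp (X B : A) :
  fps_mul (fps_exp_ad X B) (fps_exp X) = fun n => fps_exp X n * B.
Proof.
apply: (fps_ode_unique (a := X)) => [|n|n].
- by rewrite /fps_mul big_ord1 /fps_exp_ad /fps_exp /= !invr1 !scale1r mulr1 mul1r.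
- rewrite fps_deriv_mul /fps_add /fps_mul -big_split mulr_sumr; apply: eq_bigr => i _.
  by rewrite /= fps_deriv_exp_ad fps_deriv_exp /ad mulrBl mulrA -!mulrA subrK.
- by rewrite /fps_deriv -mulrnAl -[_ *+ _]/(fps_deriv (fps_exp X) n) fps_deriv_exp mulrA.
Qed.

Lemma fps_deriv_exp_mul_exp (X Y : A) :
  fps_deriv (fps_mul (fps_exp X) (fps_exp Y)) =
  fps_mul (fps_exp_ad X (X + Y)) (fps_mul (fps_exp X) (fps_exp Y)).
Proof.
rewrite fps_deriv_mul -fps_mulA fps_exp_ad_mul_exp.
apply: functional_extensionality => n; rewrite /fps_add /fps_mul -big_split.
apply: eq_bigr => i _.
by rewrite !fps_deriv_exp fps_exp_comm mulrDr mulrDl !mulrA.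
Qed.

Lemma sum_compositions_of_recursion (d c : nat -> A) : c 0%N = 1 ->
    (forall n, c n.+1 *+ n.+1 = \sum_(1 <= k < n.+2) d k * c (n.+1 - k)%N) ->
  forall n, c n = \sum_(s <- compositions n) composition_term d s.
Proof.
move=> c0 rec_c; elim/ltn_ind=> -[|n] IH.
  by rewrite compositions0 big_seq1 composition_term_nil.
rewrite compositionsS big_allpairs_dep; symmetry.
transitivity (\sum_(m <- iota 1 n.+1) (n.+1%:R : F)^-1 *: (d m * c (n.+1 - m)%N)).
  apply: eq_big_seq => m; rewrite mem_iota => /andP [m1 m2].
  rewrite (IH (n.+1 - m)%N); last lia.
  rewrite mulr_sumr scaler_sumr; apply: eq_big_seq => s.
  rewrite mem_compositions => /andP [_ /eqP sum_s].
  rewrite /composition_term denom_cons big_cons sum_s subnKC; last lia.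
  by rewrite natrM invfM -scalerA scalerAr.
rewrite -scaler_sumr -[iota 1 n.+1]/(index_iota 1 n.+2) -rec_c.
by rewrite -scaler_nat scalerA mulVf ?natrS_neq0 // scale1r.
Qed.

Lemma coef_exp_mul_exp (X Y : A) n :
  fps_mul (fps_exp X) (fps_exp Y) n =
  \sum_(s <- compositions n) composition_term (fun k => Dn X Y k k) s.
Proof.
apply: sum_compositions_of_recursion => [|{}n].
  by rewrite /fps_mul big_ord1 /fps_exp /= !invr1 !scale1r mulr1.
rewrite -[LHS]/(fps_deriv _ n) fps_deriv_exp_mul_exp big_add1 /= big_mkord.
by apply: eq_bigr => i _; rewrite /Dn eqxx subSS.
Qed.

End CharZero.
End PowerSeries.

Theorem theorem4p1 (F : fieldType) (A : algType F)
  (charF0 : [pchar F] =i pred0) (X Y : A) :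
  exists S : fps A,
    tadic_sum_to valid_index (bch_term X Y) S /\
    fps_mul (fps_exp X) (fps_exp Y) = fps_add (fps_one A) S.
Proof.
exists (fun N => \sum_(s <- compositions N | valid_index s)
                 composition_term (fun n => Dn X Y n n) s); split.
  exact/tadic_sum_to_compositions/coef_bch_term.
apply: functional_extensionality => -[|N]; rewrite /fps_add (coef_exp_mul_exp charF0).
  by rewrite compositions0 !big_cons !big_nil /= composition_term_nil addr0.
by rewrite /fps_one /= add0r -[in RHS]big_filter (all_filterP (compositionsS_valid N)).
Qed.
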